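(* Let $n\ge 1$, $k\ge 2$, $\mathcal{K}$ a set of size $k$, $\epsilon\ge 0$ and $p=e^\epsilon/(k-1+e^\epsilon)$. Then $\mathbf{N}\mathbf{S}\equiv\mathbf{N}\mathbf{S}^r$.
   Context: A dataset is $x\in\mathcal{K}^n$; its histogram $h(x)$ is the map $\kappa\mapsto|\{i:x_i=\kappa\}|$; $\mathcal{Z}$ is the set of histograms and $\#z$ the number of datasets with histogram $z$. Channels are row-stochastic matrices, and cascading is matrix multiplication. The full $k$-RR channel $\mathbf{N}:\mathcal{K}^n\to\mathcal{K}^n$ has $\mathbf{N}_{x,y}=\prod_{i=0}^{n-1}q(y_i\mid x_i)$ with $q(b\mid a)=p$ if $b=a$ and $(1-p)/(k-1)$ otherwise. The shuffle channel $\mathbf{S}:\mathcal{K}^n\to\mathcal{K}^n$ has $\mathbf{S}_{x,y}=1/\#h(x)$ if $h(y)=h(x)$, else $0$. The reduced shuffle channel $\mathbf{S}^r:\mathcal{K}^n\to\mathcal{Z}$ has $\mathbf{S}^r_{x,z}=1$ if $h(x)=z$, else $0$. For a prior $\pi$ and gain function $g:\mathcal{W}\times\mathcal{X}\to[0,\infty)$ ($\mathcal{W}$ finite nonempty), $V_g[\pi\triangleright\mathbf{C}]=\sum_{y}\max_{w}\sum_{x}\pi_x\mathbf{C}_{x,y}g(w,x)$. Channels with the same input set are equivalent ($\equiv$) iff they have equal posterior vulnerability for all priors and all such gain functions. *)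

From HB Require Import structures.
From mathcomp Require Import all_boot all_order all_algebra.
From mathcomp Require Import reals sequences exp.
Set Implicit Arguments. Unset Strict Implicit. Unset Printing Implicit Defensive.
Import Order.TTheory GRing.Theory Num.Theory.
Local Open Scope ring_scope.

Section Channels.
Variable R : realType.

Definition channel (X Y : finType) := X -> Y -> R.

Definition row_stochastic (X Y : finType) (C : channel X Y) : Prop :=
  (forall x y, 0 <= C x y) /\ (forall x, \sum_(y : Y) C x y = 1).

Definition cascade (X Y Z : finType) (C : channel X Y) (D : channel Y Z)
  : channel X Z := fun x z => \sum_(y : Y) C x y * D y z.

(* maximum of a function over a (nonempty) finite type; 0 if the type is empty *)
Definition fmax (W : finType) (F : W -> R) : R :=
  match [pick w : W] with
  | Some w0 => \big[Num.max/F w0]_(w : W) F w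
  | None => 0
  end.

Definition prior (X : finType) (pi : X -> R) : Prop :=
  (forall x, 0 <= pi x) /\ \sum_(x : X) pi x = 1.

Definition post_vuln (X Y W : finType) (pi : X -> R) (C : channel X Y)
  (g : W -> X -> R) : R :=
  \sum_(y : Y) fmax (fun w : W => \sum_(x : X) pi x * C x y * g w x).

Definition chan_equiv (X Y1 Y2 : finType) (C1 : channel X Y1)
  (C2 : channel X Y2) : Prop :=
  forall pi : X -> R, prior pi ->
  forall (W : finType), (0 < #|W|)%N ->
  forall g : W -> X -> R, (forall w x, 0 <= g w x) ->
  post_vuln pi C1 g = post_vuln pi C2 g.

Definition dataset (n : nat) (K : finType) := {ffun 'I_n -> K}.

Definition hist (n : nat) (K : finType) (x : dataset n K)
  : {ffun K -> 'I_n.+1} :=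
  [ffun a => inord #|[set i | x i == a]|].

Definition histT (n : nat) (K : finType) : finType :=
  {z : {ffun K -> 'I_n.+1} | [exists x : dataset n K, hist x == z]}.

Definition nhist (n : nat) (K : finType) (z : {ffun K -> 'I_n.+1}) : nat :=
  #|[set y : dataset n K | hist y == z]|.

Definition krr_q (k : nat) (p : R) (K : finType) (a b : K) : R :=
  if b == a then p else (1 - p) / (k%:R - 1).

Definition Nchan (k : nat) (p : R) (n : nat) (K : finType)
  : channel (dataset n K) (dataset n K) :=
  fun x y => \prod_(i < n) krr_q k p (x i) (y i).

Definition Schan (n : nat) (K : finType)
  : channel (dataset n K) (dataset n K) :=
  fun x y => if hist y == hist x then (nhist (hist x))%:R^-1 else 0.

Definition Srchan (n : nat) (K : finType)
  : channel (dataset n K) (histT n K) :=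
  fun x z => if hist x == val z then 1 else 0.

End Channels.

(* Each column y of C S is the column hist y of C S^r scaled by 1/#(hist y),
   and these weights sum to 1 over the datasets sharing a histogram.  Since
   the maximum over guesses commutes with nonnegative scaling, every posterior
   vulnerability computed from C S regroups into the one computed from C S^r,
   whatever the channel C in front of the shuffle. *)
From HB Require Import structures.
From mathcomp Require Import all_boot all_order all_algebra.
From mathcomp Require Import reals sequences exp.
Import Order.TTheory GRing.Theory Num.Theory.
Local Open Scope ring_scope.

Section ColumnMerging.
Variable R : realType.

Lemma eq_fmax (W : finType) (F G : W -> R) : F =1 G -> fmax F = fmax G.
Proof.
by move=> eFG; rewrite /fmax; case: pickP => // w0 _; rewrite eFG; apply: eq_bigr.
Qed.

Lemma fmaxMl (W : finType) (c : R) (F : W -> R) :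
  0 <= c -> fmax (fun w => c * F w) = c * fmax F.
Proof.
move=> c_ge0; rewrite /fmax; case: pickP => [w0 _|_]; last by rewrite mulr0.
by rewrite (big_morph (fun a => c * a) (fun a b => maxr_pMr a b c_ge0) (erefl (c * F w0))).
Qed.

Variables (X Y Z : finType) (C1 : channel R X Y) (C2 : channel R X Z).
Variables (f : Y -> Z) (c : Y -> R).
Hypothesis c_ge0 : forall y, 0 <= c y.
Hypothesis sum_fiber_c : forall z, \sum_(y | f y == z) c y = 1.
Hypothesis C1_scaled_columns : forall x y, C1 x y = c y * C2 x (f y).

Lemma post_vuln_merge_columns (pi : X -> R) (W : finType) (g : W -> X -> R) :
  post_vuln pi C1 g = post_vuln pi C2 g.
Proof.
have column_vuln y : fmax (fun w => \sum_x pi x * C1 x y * g w x)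
    = c y * fmax (fun w => \sum_x pi x * C2 x (f y) * g w x).
  rewrite -fmaxMl //; apply: eq_fmax => w; rewrite big_distrr /=.
  by apply: eq_bigr => x _; rewrite C1_scaled_columns mulrCA !mulrA.
rewrite /post_vuln (partition_big f predT) //=; apply: eq_bigr => z _.
rewrite (eq_bigr (fun y => c y * fmax (fun w => \sum_x pi x * C2 x z * g w x))).
  by rewrite -mulr_suml sum_fiber_c mul1r.
by move=> y /eqP <-; apply: column_vuln.
Qed.

Lemma chan_equiv_merge_columns : chan_equiv C1 C2.
Proof. by move=> pi _ W _ g _; apply: post_vuln_merge_columns. Qed.

End ColumnMerging.

Section Shuffle.
Variables (R : realType) (n : nat) (K : finType).

Definition histT_of (y : dataset n K) : histT n K :=
  exist _ (hist y) (introT existsP (ex_intro _ y (eqxx (hist y)))).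

Lemma nhist_gt0 (z : histT n K) : (0 < nhist (val z))%N.
Proof.
case: z => z /= /existsP [y /eqP hy]; rewrite /nhist card_gt0.
by apply/set0Pn; exists y; rewrite inE hy.
Qed.

Lemma card_histT_fiber (z : histT n K) :
  #|[pred y | histT_of y == z]| = nhist (val z).
Proof. by rewrite /nhist cardsE; apply: eq_card => y; rewrite !inE. Qed.

Lemma sum_histT_fiber_inv_nhist (z : histT n K) :
  \sum_(y | histT_of y == z) (nhist (hist y))%:R^-1 = 1 :> R.
Proof.
rewrite (eq_bigr (fun _ => (nhist (val z))%:R^-1)); last by move=> y /eqP <-.
rewrite sumr_const card_histT_fiber -[LHS]mulr_natr mulVf //.
by rewrite pnatr_eq0 -lt0n nhist_gt0.
Qed.

Lemma cascade_Schan (X : finType) (C : channel R X (dataset n K)) x y :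
  cascade C (@Schan R n K) x y =
  (nhist (hist y))%:R^-1 * cascade C (@Srchan R n K) x (histT_of y).
Proof.
rewrite /cascade big_distrr /=; apply: eq_bigr => y' _.
rewrite /Schan /Srchan /=; case: eqP => [->|ne]; first by rewrite eqxx mulr1 mulrC.
by case: eqP => [e|]; [case: ne | rewrite !mulr0].
Qed.

Lemma cascade_Schan_equiv_Srchan (X : finType) (C : channel R X (dataset n K)) :
  chan_equiv (cascade C (@Schan R n K)) (cascade C (@Srchan R n K)).
Proof.
apply: (@chan_equiv_merge_columns R _ _ _ _ _ histT_of
          (fun y => (nhist (hist y))%:R^-1)) => [y||].
- by rewrite invr_ge0 ler0n.
- exact: sum_histT_fiber_inv_nhist.
- by move=> x y; apply: cascade_Schan.
Qed.

End Shuffle.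

Theorem mainTheorem3 (R : realType) (n k : nat) (K : finType) (eps : R) :
  (1 <= n)%N -> (2 <= k)%N -> #|K| = k -> 0 <= eps ->
  let p := expR eps / (k%:R - 1 + expR eps) in
  chan_equiv (cascade (@Nchan R k p n K) (@Schan R n K))
             (cascade (@Nchan R k p n K) (@Srchan R n K)).
Proof. by move=> _ _ _ _ p; apply: cascade_Schan_equiv_Srchan. Qed.
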